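(* $E_3\leq_{\mathrm{Learn}}\mathbf{PL}$: every $E_3$-learnable family of structures is $\mathbf{PL}$-learnable.
   Context: All structures are countable, have domain $\mathbb{N}$, are in a finite relational signature, and are identified with their atomic diagrams (elements of $2^{\mathbb{N}}$). A family of structures $\mathfrak{K}$ is a countable set of pairwise nonisomorphic such structures; $\mathcal{S}\restriction_s$ is the finite substructure on $\{0,\dots,s\}$; $\mathrm{LD}(\mathfrak{K})\subseteq2^{\mathbb{N}}$ is the set of structures with domain $\mathbb{N}$ isomorphic to a member of $\mathfrak{K}$ (subspace topology). For an equivalence relation $E$ on a space $X$, $\mathfrak{K}$ is $E$-learnable if there is a continuous $\Gamma:\mathrm{LD}(\mathfrak{K})\to X$ with $\mathcal{S}\cong\mathcal{S}'\iff\Gamma(\mathcal{S})E\Gamma(\mathcal{S}')$ on $\mathrm{LD}(\mathfrak{K})$. Fix a computable bijection $\langle\cdot,\cdot\rangle:\mathbb{N}^2\to\mathbb{N}$; for $p\in\mathbb{N}^{\mathbb{N}\times\mathbb{N}}$ let $p^{[m]}(n)=p(\langle m,n\rangle)$; $p\,E_0\,q$ (for $p,q\in\mathbb{N}^{\mathbb{N}}$) iff $\exists m\forall n\ge m\ p(n)=q(n)$; $p\,E_3\,q$ iff $\forall m\ p^{[m]}E_0q^{[m]}$. A learner is an arbitrary function from $\{\mathcal{S}\restriction_s:\mathcal{S}\in\mathrm{LD}(\mathfrak{K})\}$ to $\{\ulcorner\mathcal{A}\urcorner:\mathcal{A}\in\mathfrak{K}\}\cup\{?\}$. $\mathfrak{K}$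 is $\mathbf{PL}$-learnable if some learner $\mathbf{M}$ satisfies: for every $\mathcal{S}\in\mathrm{LD}(\mathfrak{K})$ and $\mathcal{A}\in\mathfrak{K}$, $\{n:\mathbf{M}(\mathcal{S}\restriction_n)=\ulcorner\mathcal{A}\urcorner\}$ is infinite iff $\mathcal{A}\cong\mathcal{S}$. *)

From mathcomp Require Import all_boot.
Set Implicit Arguments. Unset Strict Implicit. Unset Printing Implicit Defensive.

(* A finite relational signature: the list of arities of its relation symbols. *)
Definition signature := seq nat.

(* A structure with domain nat: relation symbol i is interpreted on
   (arity i)-tuples of naturals. This is exactly the atomic diagram. *)
Definition structure (L : signature) :=
  forall i : 'I_(size L), (nth 0 L i).-tuple nat -> bool.

Definition iso (L : signature) (A B : structure L) : Prop :=
  exists f : nat -> nat, bijective f /\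
    forall (i : 'I_(size L)) (t : (nth 0 L i).-tuple nat),
      A i t = B i (map_tuple f t).

(* The finite substructure S|_s on {0,...,s}, represented as a structure
   which is false on every tuple not contained in {0,...,s}. *)
Definition restrict (L : signature) (s : nat) (S : structure L) : structure L :=
  fun i t => all (fun x => x <= s) t && S i t.

Definition agree_upto (L : signature) (s : nat) (S S' : structure L) : Prop :=
  forall (i : 'I_(size L)) (t : (nth 0 L i).-tuple nat),
    all (fun x => x <= s) t -> S i t = S' i t.

(* A family: a countable set of pairwise nonisomorphic structures,
   indexed injectively by a countable type I. *)
Definition is_family (L : signature) (I : countType) (K : I -> structure L) : Prop :=
  forall i j : I, iso (K i) (K j) -> i = j.

Definition LD (L : signature) (I : countType) (K : I -> structure L)
  (S : structure L) : Prop := exists i : I, iso (K i) S.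

(* E_0 on nat^nat and E_3 on nat^(nat x nat) (p^[m](n) := p m n). *)
Definition E0 (p q : nat -> nat) : Prop := exists m, forall n, m <= n -> p n = q n.
Definition E3 (p q : nat -> nat -> nat) : Prop := forall m, E0 (p m) (q m).

(* Continuity of G : LD(K) -> nat^(nat x nat), where LD(K) carries the
   subspace topology of Cantor space (atomic diagrams) and the target the
   product topology of discrete nat. *)
Definition continuous_on_LD (L : signature) (I : countType) (K : I -> structure L)
  (G : structure L -> nat -> nat -> nat) : Prop :=
  forall S, LD K S -> forall m n, exists s, forall S', LD K S' ->
    agree_upto s S S' -> G S' m n = G S m n.

Definition E3_learnable (L : signature) (I : countType) (K : I -> structure L) : Prop :=
  exists G : structure L -> nat -> nat -> nat,
    continuous_on_LD K G /\
    forall S S', LD K S -> LD K S' -> (iso S S' <-> E3 (G S) (G S')).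

(* A learner maps S|_s to a code of a member of K (Some i) or to ? (None). *)
Definition PL_learnable (L : signature) (I : countType) (K : I -> structure L) : Prop :=
  exists M : nat -> structure L -> option I,
    forall S, LD K S -> forall i : I,
      ((forall m, exists n, m <= n /\ M n (restrict n S) = Some i) <-> iso (K i) S).

From mathcomp Require Import all_boot boolp.

(* Let G continuously reduce isomorphism on LD(K) to E_3.  For i <> j the
   structures K i and K j are not isomorphic, so on some column m the
   sequences G(K i) and G(K j) differ infinitely often.  For the candidate i,
   the pair (j, k) is ruled out at stage s once the first s bits of S force
   G(S)(m, n) <> G(K j)(m, n) for some n >= k.  If S ~= K i, then G(S)
   E_0-agrees with G(K i) on column m, so by continuity every pair is
   eventually ruled out; if S ~= K i0 with i0 <> i, the pair (i0, k) is never
   ruled out once k bounds the disagreement of G(S) and G(K i0) on their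
   column.  So the length of the initial segment of ruled-out codes is
   unbounded iff S ~= K i: it increases infinitely often for the true index
   and finitely often for every other one, and the learner outputs at stage n
   the candidate of least code whose length has just increased. *)

Set Implicit Arguments. Unset Strict Implicit. Unset Printing Implicit Defensive.

Lemma E0_notE0_neq (p q r : nat -> nat) : E0 p q -> ~ E0 p r ->
  forall k, exists n, k <= n /\ q n <> r n.
Proof.
move=> [k0 pq] pNr k; apply: contrapT => q_eq_r; apply: pNr.
exists (maxn k k0) => n; rewrite geq_max => /andP[kn k0n]; rewrite pq //.
by apply: contrapT => neq; apply: q_eq_r; exists n.
Qed.

Lemma eventually_forall_lt (P : nat -> nat -> Prop) N :
  (forall a, a < N -> exists m, forall n, m <= n -> P a n) ->
  exists m, forall a n, a < N -> m <= n -> P a n.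
Proof.
elim: N => [|N IH] eventually; first by exists 0.
have [m1 P_lt] := IH (fun a aN => eventually a (ltnW aN)).
have [m2 P_N] := eventually N (ltnSn N).
exists (maxn m1 m2) => a n; rewrite ltnS leq_eqVlt geq_max.
by case/orP=> [/eqP-> | ?] /andP[? ?]; [apply: P_N | apply: P_lt].
Qed.

Lemma nondecreasing_unbounded_jumps (f : nat -> nat) :
  {homo f : m n / m <= n} -> (forall c, exists s, c <= f s) ->
  forall m, exists n, m <= n /\ f n.-1 < f n.
Proof.
move=> f_homo f_unbounded m; apply: contrapT => no_jump.
have flat d : f (m + d) <= f m.
  elim: d => [|d IH]; first by rewrite addn0.
  rewrite leqNgt; apply/negP => jump; apply: no_jump.
  by exists (m + d.+1); rewrite leq_addr addnS /= -addnS (leq_ltn_trans IH jump).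
have [s fs] := f_unbounded (f m).+1.
have s_le : s <= m + (s - m) by rewrite -leq_subLR.
by have := leq_trans fs (f_homo _ _ s_le); rewrite ltnNge flat.
Qed.

Lemma nondecreasing_bounded_eventually_flat (f : nat -> nat) B :
  {homo f : m n / m <= n} -> (forall s, f s <= B) ->
  exists m, forall n, m <= n -> f n <= f n.-1.
Proof.
move=> f_homo f_bounded.
have attained : exists v, `[< exists s, f s = v >] by exists (f 0); apply/asboolP; exists 0.
have bounded v : `[< exists s, f s = v >] -> v <= B by move/asboolP=> [s <-].
case: (ex_maxnP attained bounded) => _ /asboolP[s <-] f_max.
exists s.+1 => n sn; apply: leq_trans (f_max (f n) _) (f_homo _ _ _).
  by apply/asboolP; exists n.
by rewrite -ltnS prednK // (leq_ltn_trans _ sn).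
Qed.

Section PrefixLength.
Variable P : nat -> nat -> Prop.

Definition prefix_len (s : nat) : nat := find (fun x => ~~ `[< P s x >]) (iota 0 s.+1).

Lemma prefix_len_lt s y : y < prefix_len s -> P s y.
Proof.
move=> y_lt; have y_le : y < s.+1.
  by apply: leq_trans y_lt _; rewrite -[s.+1](size_iota 0) find_size.
by have /negbFE/asboolP := before_find 0 y_lt; rewrite nth_iota.
Qed.

Lemma prefix_len_gt s y : y <= s -> (forall z, z <= y -> P s z) -> y < prefix_len s.
Proof.
move=> y_le P_le; rewrite ltnNge; apply/negP => len_le.
have has_fail : has (fun x => ~~ `[< P s x >]) (iota 0 s.+1).
  by rewrite has_find size_iota ltnS (leq_trans len_le y_le).
have /negP[] := nth_find 0 has_fail; apply/asboolP.
by rewrite nth_iota ?add0n; [apply: P_le | by move: has_fail; rewrite has_find size_iota].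
Qed.

Hypothesis P_mono : forall s s' x, s <= s' -> P s x -> P s' x.

Lemma prefix_len_homo : {homo prefix_len : s s' / s <= s'}.
Proof.
move=> s s' ss'; rewrite leqNgt; apply/negP => lt_len.
have y_le : prefix_len s' <= s.
  by rewrite -ltnS; apply: leq_trans lt_len _; rewrite -[s.+1](size_iota 0) find_size.
suff: prefix_len s' < prefix_len s' by rewrite ltnn.
apply: prefix_len_gt (leq_trans y_le ss') _ => z z_le.
by apply: P_mono ss' _; apply: prefix_len_lt (leq_ltn_trans z_le lt_len).
Qed.

Lemma prefix_len_unbounded : (forall x, exists s, P s x) ->
  forall c, exists s, c <= prefix_len s.
Proof.
move=> eventually; elim=> [|c [s c_le]]; first by exists 0.
have [sc P_c] := eventually c.
exists (maxn (maxn s sc) c); apply: prefix_len_gt; first exact: leq_maxr.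
move=> z; rewrite leq_eqVlt => /orP[/eqP-> | z_lt].
  by apply: P_mono P_c; rewrite leq_max leq_maxr.
by apply: P_mono (prefix_len_lt (leq_trans z_lt c_le)); rewrite leq_max leq_maxl.
Qed.

Lemma prefix_len_bounded x : (forall s, ~ P s x) -> forall s, prefix_len s <= x.
Proof. by move=> never s; rewrite leqNgt; apply/negP => /prefix_len_lt/never. Qed.

End PrefixLength.

Section FirstCode.
Variable T : countType.

Definition first_code (P : pred T) (n : nat) : option T :=
  let codes := mkseq pickle_inv n.+1 in nth None codes (find (oapp P false) codes).

Lemma first_codeP (P : pred T) n x : first_code P n = Some x -> P x.
Proof.
rewrite /first_code; set codes := mkseq _ _.
case: findP => [_ | k _ /(_ None) found _]; first by rewrite nth_default.
by move: found; case: nth => //= y Py [<-].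
Qed.

Lemma first_code_least (P : pred T) n x : pickle x <= n -> P x ->
  (forall y, pickle y < pickle x -> ~~ P y) -> first_code P n = Some x.
Proof.
move=> x_le Px before_x; rewrite /first_code; set codes := mkseq _ _.
have codesE k : k <= n -> nth None codes k = pickle_inv k by move=> ?; rewrite nth_mkseq.
have found_x : oapp P false (nth None codes (pickle x)) by rewrite codesE // pickleK_inv.
have x_in : pickle x < size codes by rewrite size_mkseq.
case: findP => [/hasPn/(_ _ (mem_nth None x_in))/negP[] // | k _ /(_ None) found before].
case: (ltngtP k (pickle x)) => [k_lt | x_lt | ->]; last by rewrite codesE // pickleK_inv.
- move: found; rewrite codesE; last exact: leq_trans (ltnW k_lt) x_le.
  case ek: (pickle_inv k) => [y|] //= Py.
  have yk : pickle y = k by have := @pickle_invK T k; rewrite ek.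
  by move: Py; rewrite (negbTE (before_x y _)) // yk.
- by rewrite before in found_x.
Qed.

Lemma first_code_often (b : T -> nat -> bool) x :
  (forall m, exists n, m <= n /\ b x n) ->
  (forall y, y != x -> exists m, forall n, m <= n -> ~~ b y n) ->
  forall m, exists n, m <= n /\ first_code (b ^~ n) n = Some x.
Proof.
move=> x_often others_rarely.
have eventually_quiet a : a < pickle x ->
    exists m, forall n, m <= n -> forall y, pickle y = a -> ~~ b y n.
  move=> a_lt; have [[y ya] | no_code] := EM (exists y : T, pickle y = a); last first.
    by exists 0 => n _ y ya; case: no_code; exists y.
  have [|m rare] := others_rarely y.
    by apply/eqP => yx; move: a_lt; rewrite -ya yx ltnn.
  exists m => n mn y' y'a; have -> : y' = y by apply: (pcan_inj pickleK_inv); rewrite ya.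
  exact: rare.
have [m0 quiet] := eventually_forall_lt eventually_quiet.
move=> m; have [n [n_ge b_x_n]] := x_often (maxn (maxn m m0) (pickle x)).
move: n_ge; rewrite !geq_max => /andP[/andP[mn m0n] xn].
exists n; split=> //; apply: first_code_least => // y lt.
exact: quiet lt m0n y erefl.
Qed.

End FirstCode.

Lemma agree_upto_le L s s' (S S' : structure L) :
  s <= s' -> agree_upto s' S S' -> agree_upto s S S'.
Proof.
by move=> ss' agree i t ts; apply: agree; apply: sub_all ts => x /leq_trans; apply.
Qed.

Lemma agree_upto_restrict L s n (S S' : structure L) : s <= n ->
  agree_upto s (restrict n S) S' <-> agree_upto s S S'.
Proof.
move=> sn; have restrictE (i : 'I_(size L)) (t : (nth 0 L i).-tuple nat) :
    all (fun x => x <= s) t -> restrict n S t = S i t.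
  by move=> ts; rewrite /restrict (sub_all _ ts) // => x /leq_trans; apply.
by split=> agree i t ts; [rewrite -restrictE // | rewrite restrictE //]; apply: agree.
Qed.

Lemma iso_refl L (A : structure L) : iso A A.
Proof.
exists id; split=> [|i t]; first by exists id.
by congr (A i _); apply: val_inj; rewrite /= map_id.
Qed.

Lemma LD_member L (I : countType) (K : I -> structure L) i : LD K (K i).
Proof. by exists i; apply: iso_refl. Qed.

Section E3ToPL.
Variables (L : signature) (I : countType) (K : I -> structure L).
Variable G : structure L -> nat -> nat -> nat.
Hypothesis K_family : is_family K.
Hypothesis G_cont : continuous_on_LD K G.
Hypothesis G_reduction : forall S S', LD K S -> LD K S' -> (iso S S' <-> E3 (G S) (G S')).

Definition sep_col (i j : I) : nat :=
  if pselect (exists m, ~ E0 (G (K i) m) (G (K j) m)) is left ex then projT1 (cid ex)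
  else 0.

Lemma sep_colP i j : i != j -> ~ E0 (G (K i) (sep_col i j)) (G (K j) (sep_col i j)).
Proof.
move=> ne; rewrite /sep_col; case: pselect => [ex | no_col]; first exact: projT2 (cid ex).
move/eqP: ne; case; apply: K_family; apply/(G_reduction (LD_member K i) (LD_member K j)).
by move=> m; apply: contrapT => nE0; apply: no_col; exists m.
Qed.

Definition rules_out (i : I) (s : nat) (S : structure L) (j : I) (k : nat) : Prop :=
  exists2 n, k <= n & forall S', LD K S' -> agree_upto s S S' ->
    G S' (sep_col i j) n <> G (K j) (sep_col i j) n.

(* Codes that do not decode to a pair count as ruled out, and so do the pairs
   (i, k), which no stage could rule out. *)
Definition checked (i : I) (s : nat) (S : structure L) (x : nat) : Prop :=
  if unpickle x is Some (j, k) then j = i \/ rules_out i s S j k else True.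

Definition score (i : I) (S : structure L) : nat -> nat :=
  prefix_len (fun s => checked i s S).

Definition score_rises (S : structure L) (i : I) (n : nat) : bool := score i S n.-1 < score i S n.

Definition learner (n : nat) (S : structure L) : option I := first_code (score_rises S ^~ n) n.

Lemma checked_le i s s' S x : s <= s' -> checked i s S x -> checked i s' S x.
Proof.
rewrite /checked => ss'; case: unpickle => [[j k] [-> | [n kn not_Kj]]|] //; first by left.
by right; exists n => // S' S'_LD agree; apply: not_Kj (agree_upto_le ss' agree).
Qed.

Lemma checked_restrict i s n S x : s <= n -> checked i s (restrict n S) x <-> checked i s S x.
Proof.
rewrite /checked /rules_out => sn; case: unpickle => [[j k]|] //.
split=> -[-> | [n' kn not_Kj]]; (try by left); right;
  by exists n' => // S' S'_LD /(agree_upto_restrict _ _ sn); apply: not_Kj.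
Qed.

Lemma score_homo i S : {homo score i S : s s' / s <= s'}.
Proof. by apply: prefix_len_homo => s s' x; apply: checked_le. Qed.

Lemma learner_restrict n S : learner n (restrict n S) = learner n S.
Proof.
have score_restrict i s : s <= n -> score i (restrict n S) s = score i S s.
  move=> sn; apply: eq_find => x /=; congr (~~ _).
  by apply: asbool_equiv_eq; apply: checked_restrict.
rewrite /learner; congr first_code; apply/funext => i.
by rewrite /score_rises !score_restrict ?leq_pred.
Qed.

Lemma rules_out_eventually S i j k : LD K S -> iso (K i) S -> i != j ->
  exists s, rules_out i s S j k.
Proof.
move=> S_LD iso_iS ne; set m := sep_col i j.
have E0_iS := (G_reduction (LD_member K i) S_LD).1 iso_iS m.
have [n [kn neq]] := E0_notE0_neq E0_iS (sep_colP ne) k.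
have [s determined] := G_cont S_LD m n.
by exists s; exists n => // S' S'_LD agree; rewrite determined.
Qed.

Lemma never_ruled_out S i i0 : LD K S -> iso (K i0) S ->
  exists k, forall s, ~ rules_out i s S i0 k.
Proof.
move=> S_LD iso_i0S; set m := sep_col i i0.
have [k E0_i0S] := (G_reduction (LD_member K i0) S_LD).1 iso_i0S m.
exists k => s [n kn /(_ S S_LD (fun _ _ _ => erefl))].
by apply; rewrite E0_i0S.
Qed.

Lemma score_rises_often S i : LD K S -> iso (K i) S ->
  forall m, exists n, m <= n /\ score_rises S i n.
Proof.
move=> S_LD iso_iS; apply: nondecreasing_unbounded_jumps; first exact: score_homo.
apply: prefix_len_unbounded => [s s' x|x]; first exact: checked_le.
rewrite /checked; case: unpickle => [[j k]|]; last by exists 0.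
have [<-|ne] := eqVneq i j; first by exists 0; left.
by have [s ?] := rules_out_eventually k S_LD iso_iS ne; exists s; right.
Qed.

Lemma score_rises_finitely S i i0 : LD K S -> iso (K i0) S -> i != i0 ->
  exists m, forall n, m <= n -> ~~ score_rises S i n.
Proof.
move=> S_LD iso_i0S ne; have [k never] := never_ruled_out i S_LD iso_i0S.
have score_bounded s : score i S s <= pickle (i0, k).
  apply: prefix_len_bounded => {}s; rewrite /checked pickleK => -[i0i | ]; last exact: never.
  by move: ne; rewrite i0i eqxx.
have [m flat] := nondecreasing_bounded_eventually_flat (score_homo i S) score_bounded.
by exists m => n mn; rewrite /score_rises -leqNgt flat.
Qed.

End E3ToPL.

Theorem mainTheorem15 (L : signature) (I : countType) (K : I -> structure L) :
  is_family K -> E3_learnable K -> PL_learnable K.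
Proof.
move=> K_family [G [G_cont G_reduction]].
exists (learner K G) => S S_LD i; split=> [often | iso_iS].
- have [i0 iso_i0S] := S_LD; have [-> // | ne] := eqVneq i i0.
  have [m rare] := score_rises_finitely G_reduction S_LD iso_i0S ne.
  have [n [mn]] := often m; rewrite learner_restrict => /first_codeP rises_n.
  by move: (rare n mn); rewrite rises_n.
- move=> m; have [n [mn learned]] := first_code_often
    (score_rises_often K_family G_cont G_reduction S_LD iso_iS)
    (fun j ne => score_rises_finitely G_reduction S_LD iso_iS ne) m.
  by exists n; rewrite learner_restrict.
Qed.
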